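(* Let $p$ be a prime with $p\equiv 1\pmod 4$, let $a$ be a generator of $\mathbb{F}_p^*$, let $k=\frac{p-1}{4}$, and let $$g_a=\begin{pmatrix}a&0\\0&a^{-1}\end{pmatrix},\qquad s=\begin{pmatrix}1&2^{-1}a^k\\ a^k&2^{-1}\end{pmatrix}\in SL_2(\mathbb{F}_p).$$ Let $T_w=\{g\in SL_2(\mathbb{F}_p): gw=wg\}$ be the centralizer of $w=\begin{pmatrix}0&1\\-1&0\end{pmatrix}$ in $SL_2(\mathbb{F}_p)$. Then $t=s\,g_a\,s^{-1}$ is a generator of $T_w$.
   Context: $2^{-1}$ denotes the inverse of $2$ in $\mathbb{F}_p$. Equivalently, $T_w=\left\{\begin{pmatrix}\alpha&-\beta\\ \beta&\alpha\end{pmatrix}:\alpha,\beta\in\mathbb{F}_p,\ \alpha^2+\beta^2=1\right\}$. *)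

From HB Require Import structures.
From mathcomp Require Import all_boot all_order all_algebra all_fingroup.
Set Implicit Arguments. Unset Strict Implicit. Unset Printing Implicit Defensive.
Import GRing.Theory.
Local Open Scope ring_scope.

Definition generates_Fp_units (p : nat) (a : 'F_p) : Prop :=
  a != 0 /\ forall x : 'F_p, x != 0 -> exists n : nat, x = a ^+ n.

Definition SL2 (p : nat) : {set 'M['F_p]_2} := [set g | \det g == 1].

Definition w_mx (p : nat) : 'M['F_p]_2 :=
  \matrix_(i < 2, j < 2)
    (if (val i == 0%N) && (val j == 1%N) then 1
     else if (val i == 1%N) && (val j == 0%N) then -1 else 0).

Definition T_w (p : nat) : {set 'M['F_p]_2} :=
  [set g in SL2 p | g *m w_mx p == w_mx p *m g].

Definition g_a (p : nat) (a : 'F_p) : 'M['F_p]_2 :=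
  \matrix_(i < 2, j < 2)
    (if (val i == 0%N) && (val j == 0%N) then a
     else if (val i == 1%N) && (val j == 1%N) then a^-1 else 0).

Definition s_mx (p : nat) (a : 'F_p) : 'M['F_p]_2 :=
  let k := ((p.-1) %/ 4)%N in
  \matrix_(i < 2, j < 2)
    (if (val i == 0%N) && (val j == 0%N) then 1
     else if (val i == 0%N) && (val j == 1%N) then (2%:R)^-1 * a ^+ k
     else if (val i == 1%N) && (val j == 0%N) then a ^+ k
     else (2%:R)^-1).

Definition generates (p : nat) (x : 'M['F_p]_2) (H : {set 'M['F_p]_2}) : Prop :=
  forall g : 'M['F_p]_2, g \in H <-> exists n : nat, g = x ^+ n.

From mathcomp Require Import all_boot all_order all_algebra all_fingroup all_field.
From mathcomp Require Import ring zify.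

Set Implicit Arguments.
Unset Strict Implicit.
Unset Printing Implicit Defensive.

Import GRing.Theory.
Local Open Scope ring_scope.

(* Writing i = a^k, a square root of -1 in F_p (a generates F_p^* and
   p - 1 = 4k), the matrix s diagonalises w: s^-1 w s = diag(i, -i).  As
   i <> -i, conjugation by s maps T_w onto the centraliser of diag(i, -i) in
   SL_2, i.e. onto the diagonal matrices diag(x, x^-1), x <> 0; these are
   exactly the powers of g_a = diag(a, a^-1).  Conjugating back, T_w is the
   set of powers of s g_a s^-1. *)

Lemma generator_expr_half (F : finFieldType) (a : F) (m : nat) :
  a != 0 -> (forall x : F, x != 0 -> exists n, x = a ^+ n) ->
  #|F| = (2 * m).+1 -> a ^+ m = -1.
Proof.
move=> a0 agen cardF.
have m_gt0 : (0 < m)%N by have := card_finNzRing_gt1 F; rewrite cardF; lia.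
have a2m : a ^+ (2 * m) = 1.
  by apply: (mulfI a0); rewrite -exprS -cardF expf_card mulr1.
have : (a ^+ m) ^+ 2 == 1 by rewrite -exprM mulnC a2m.
rewrite sqrf_eq1 => /orP[/eqP am1 | /eqP //]; exfalso.
have powers : [set~ (0 : F)] \subset [set a ^+ j | j : 'I_m].
  apply/subsetP => x; rewrite !inE => /agen[n ->].
  apply/imsetP; exists (Ordinal (ltn_pmod n m_gt0)) => //=.
  by rewrite {1}(divn_eq n m) exprD mulnC exprM am1 expr1n mul1r.
have := leq_trans (subset_leq_card powers) (leq_imset_card _ _).
by rewrite cardsC1 cardF card_ord; lia.
Qed.

Section Conjugation.

Variables (R : unitRingType) (s : R).
Hypothesis s_unit : s \is a GRing.unit.

Lemma conjrM (x y : R) : s * x / s * (s * y / s) = s * (x * y) / s.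
Proof. by rewrite !mulrA divrK. Qed.

Lemma conjrX (x : R) (n : nat) : (s * x / s) ^+ n = s * x ^+ n / s.
Proof.
elim: n => [|n IHn]; first by rewrite !expr0 mulr1 divrr.
by rewrite !exprS IHn conjrM.
Qed.

Lemma conjr_inj : injective (fun x => s * x / s).
Proof.
have sV : s^-1 \is a GRing.unit by rewrite unitrV.
by move=> x y /(mulIr sV) /(mulrI s_unit).
Qed.

Lemma conjrK (x : R) : s * (s^-1 * x * s) / s = x.
Proof. by rewrite !mulrA divrr // mul1r mulrK. Qed.

Lemma conjr_generated (P : R -> Prop) (x : R) :
  (forall h, P (s * h / s) <-> exists n, h = x ^+ n) ->
  forall g, P g <-> exists n, g = (s * x / s) ^+ n.
Proof.
move=> PE g; rewrite -(conjrK g) PE.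
by split=> -[n hn]; exists n; [rewrite hn conjrX | rewrite conjrX in hn; apply: conjr_inj].
Qed.

End Conjugation.

Definition mx2 {R : nzRingType} (x y z u : R) : 'M[R]_2 :=
  \matrix_(i, j) if i == 0 then (if j == 0 then x else y)
                 else (if j == 0 then z else u).

Lemma ord2P (P : 'I_2 -> Prop) : P 0 -> P 1 -> forall i, P i.
Proof.
move=> P0 P1 [[|[|//]] i_lt2].
  by rewrite (_ : Ordinal i_lt2 = 0) //; apply: val_inj.
by rewrite (_ : Ordinal i_lt2 = 1) //; apply: val_inj.
Qed.

Section TwoByTwo.

Variable R : comNzRingType.

Lemma mx2_eta (M : 'M[R]_2) : M = mx2 (M 0 0) (M 0 1) (M 1 0) (M 1 1).
Proof. by apply/matrixP; elim/ord2P; elim/ord2P; rewrite !mxE. Qed.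

Lemma mx2_1 : mx2 1 0 0 1 = 1 :> 'M[R]_2.
Proof. by apply/matrixP; elim/ord2P; elim/ord2P; rewrite !mxE. Qed.

Lemma mulmx2 (x y z u x' y' z' u' : R) :
  mx2 x y z u * mx2 x' y' z' u' =
  mx2 (x * x' + y * z') (x * y' + y * u') (z * x' + u * z') (z * y' + u * u').
Proof.
apply/matrixP; elim/ord2P; elim/ord2P;
  by rewrite -mulmxE !mxE !big_ord_recl big_ord0 !mxE /= addr0.
Qed.

Lemma det_mx2 (x y z u : R) : \det (mx2 x y z u) = x * u - y * z.
Proof.
rewrite (expand_det_row _ ord0) !big_ord_recl big_ord0 /cofactor !det_mx11.
by rewrite !mxE /= expr0 expr1 mul1r addr0 mulN1r mulrN.
Qed.

Lemma mx2_diag_expr (x u : R) (n : nat) : mx2 x 0 0 u ^+ n = mx2 (x ^+ n) 0 0 (u ^+ n).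
Proof.
elim: n => [|n IHn]; first by rewrite !expr0 mx2_1.
by rewrite !exprS IHn mulmx2 !(mul0r, mulr0, addr0, add0r).
Qed.

End TwoByTwo.

Lemma det_conjr (R : comUnitRingType) (n : nat) (S A : 'M[R]_n.+1) :
  S \is a GRing.unit -> \det (S * A / S) = \det A.
Proof.
by move=> S_unit; rewrite -!mulmxE !det_mulmx det_inv mulrC mulrA mulVr ?mul1r // -unitmxE.
Qed.

Section DiagonalCentralizer.

Variable F : fieldType.

Lemma mx2_commute_diag_opp (e x y z u : F) : e *+ 2 != 0 ->
  mx2 x y z u * mx2 e 0 0 (-e) = mx2 e 0 0 (-e) * mx2 x y z u <-> y = 0 /\ z = 0.
Proof.
move=> e2; rewrite !mulmx2 !(mul0r, mulr0, addr0, add0r); split=> [/matrixP E | [-> ->]].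
  have := E 0 1; have := E 1 0; rewrite !mxE /= => Ez Ey.
  have zero_of_anticomm (v : F) : v * -e = e * v -> v = 0.
    move=> Ev; have : v * (e *+ 2) == 0.
      by rewrite mulrnAr mulr2n {1}mulrC -Ev mulrN addNr.
    by rewrite mulf_eq0 (negbTE e2) orbF => /eqP.
  by split; apply: zero_of_anticomm; rewrite // mulrN Ez mulNr opprK.
by rewrite !(mul0r, mulr0) (mulrC x) (mulrC u).
Qed.

Lemma SL2_commute_diag_opp (e : F) (M : 'M[F]_2) : e *+ 2 != 0 ->
  \det M = 1 /\ M * mx2 e 0 0 (-e) = mx2 e 0 0 (-e) * M <->
  exists2 x, x != 0 & M = mx2 x 0 0 x^-1.
Proof.
move=> e2; split=> [[] | [x x0 ->]]; last first.
  by rewrite det_mx2 mx2_commute_diag_opp // mulr0 subr0 mulfV.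
rewrite [M]mx2_eta det_mx2 mx2_commute_diag_opp // => xu1 [y0 z0].
rewrite y0 z0 mulr0 subr0 in xu1 *.
have x0 : M 0 0 != 0.
  by apply/eqP => x0; move: xu1; rewrite x0 mul0r => /esym/eqP; rewrite oner_eq0.
by exists (M 0 0); rewrite // -[(M 0 0)^-1]mulr1 -xu1 mulKf.
Qed.

Lemma mx2_diag_generator (a : F) : a != 0 ->
  (forall x : F, x != 0 -> exists n, x = a ^+ n) -> forall M : 'M[F]_2,
  (exists2 x, x != 0 & M = mx2 x 0 0 x^-1) <-> exists n, M = mx2 a 0 0 a^-1 ^+ n.
Proof.
move=> a0 agen M; split=> [[x /agen[n ->] ->] | [n ->]].
  by exists n; rewrite mx2_diag_expr exprVn.
by exists (a ^+ n); rewrite ?expf_neq0 // mx2_diag_expr exprVn.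
Qed.

End DiagonalCentralizer.

Section Diagonalization.

Variables (F : fieldType) (i : F).
Hypotheses (two_neq0 : 2%:R != 0 :> F) (sqr_i : i ^+ 2 = -1).

Let S := mx2 1 (2%:R^-1 * i) i 2%:R^-1.

Lemma det_diagonalizer : \det S = 1.
Proof. by rewrite det_mx2; field: sqr_i. Qed.

Lemma w_diagonalized : mx2 0 1 (-1) 0 * S = S * mx2 i 0 0 (-i).
Proof. by rewrite !mulmx2; congr mx2; field: sqr_i. Qed.

Lemma sqrt_neg1_double_neq0 : i *+ 2 != 0.
Proof.
rewrite -mulr_natr mulf_neq0 //; apply/eqP => i0; move: sqr_i.
by rewrite i0 expr0n => /eqP; rewrite eq_sym oppr_eq0 oner_eq0.
Qed.

End Diagonalization.

Lemma w_mxE (p : nat) : w_mx p = mx2 0 1 (-1) 0.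
Proof. by apply/matrixP; elim/ord2P; elim/ord2P; rewrite !mxE. Qed.

Lemma g_aE (p : nat) (a : 'F_p) : g_a a = mx2 a 0 0 a^-1.
Proof. by apply/matrixP; elim/ord2P; elim/ord2P; rewrite !mxE. Qed.

Lemma s_mxE (p : nat) (a : 'F_p) :
  s_mx a = mx2 1 (2%:R^-1 * a ^+ (p.-1 %/ 4)) (a ^+ (p.-1 %/ 4)) 2%:R^-1.
Proof. by apply/matrixP; elim/ord2P; elim/ord2P; rewrite !mxE. Qed.

Theorem lemma2 (p : nat) (a : 'F_p) :
  prime p -> (p %% 4 = 1)%N -> generates_Fp_units a ->
  s_mx a \in SL2 p /\
  generates (s_mx a *m g_a a *m invmx (s_mx a)) (T_w p).
Proof.
move=> p_pr p_mod4 [a0 a_gen].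
have p_gt1 := prime_gt1 p_pr.
set i := a ^+ (p.-1 %/ 4).
have card_p : #|'F_p| = (2 * (2 * (p.-1 %/ 4))).+1 by rewrite card_Fp //; lia.
have sqr_i : i ^+ 2 = -1 by rewrite -exprM mulnC (generator_expr_half a0 a_gen card_p).
have two_neq0 : 2%:R != 0 :> 'F_p.
  by rewrite -(dvdn_pcharf (pchar_Fp p_pr)); apply/negP => /dvdn_leq; lia.
have det_s := det_diagonalizer two_neq0 sqr_i.
have s_unit : s_mx a \is a GRing.unit by rewrite unitmxE s_mxE det_s unitr1.
split; first by rewrite inE s_mxE det_s.
have w_conj : w_mx p = s_mx a * mx2 i 0 0 (-i) / s_mx a.
  by rewrite w_mxE s_mxE -w_diagonalized ?mulrK // -s_mxE.
apply: (conjr_generated s_unit (P := fun g => g \in T_w p)) => h.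
rewrite !inE w_conj !mulmxE (conjrM s_unit) (conjrM s_unit).
rewrite (inj_eq (conjr_inj s_unit)) det_conjr // g_aE.
rewrite -mx2_diag_generator // -(SL2_commute_diag_opp _ (sqrt_neg1_double_neq0 two_neq0 sqr_i)).
by split=> [/andP[/eqP ? /eqP ?] | [-> ->]] //; rewrite !eqxx.
Qed.
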